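(* Let $G=(V,E,w)$, $s$, $\tau$ (with $|\tau|\ge 2$) and a budget $b\ge 0$ be as in the context, and suppose that at least one feasible subgraph exists. Then among the maximizers of $\textsc{CD}_{\tau,s}(S)$ over all feasible subgraphs $S\subseteq G$, there is one that is a tree rooted at $s$, i.e. an out-arborescence rooted at $s$ (its underlying undirected graph is a tree, $s$ has in-degree $0$ and every other vertex has in-degree $1$).
   Context: Let $G=(V,E,w)$ be a finite directed graph with non-negative edge weights $w:E\to\mathbb{R}_{\ge 0}$. A path from $u$ to $v$ in a subgraph $S\subseteq G$ is a sequence $u=v_0\to v_1\to\cdots\to v_k=v$ ($k\ge 0$) with each $v_i\to v_{i+1}$ an edge of $S$; for $i\le j$, $w_P(v_i,v_j)=\sum_{m=i}^{j-1} w(v_m\to v_{m+1})$. A vertex $y$ is reachable from $x$ in $S$ if there is a path from $x$ to $y$ in $S$ (a vertex is reachable from itself). Fix a start vertex $s\in V$ and a finite target set $\tau\subseteq V\setminus\{s\}$ with $|\tau|\ge 2$. The cost of a subgraph $S$ is $w(S)=\sum_{e\in E(S)} w(e)$. For a subgraph $S$ containing $s$ and $\tau$ in which every target is reachable from $s$: for a path $P=v_0\to\cdots\to v_k$ in $S$ with $v_0=s$, $v_k=t\in\tau$, let $\ell$ be the largest index such that some target in $\tau\setminus\{t\}$ is reachable from $v_\ell$ in $S$; the last deceptive point is $l(P,t)=v_\ell$. The unique distance of $t\in\tau$ is $\textsc{U}_S(t)=\min\{w_P(l(P,t),t): P \text{ a path in } S \text{ from } s \text{ to } t\}$, and the counterdeceptiveness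 of $S$ is $\textsc{CD}_{\tau,s}(S)=\min_{t\in\tau}\textsc{U}_S(t)$. Given a budget $b\ge 0$, a subgraph $S\subseteq G$ is feasible if $s\in V(S)$, $\tau\subseteq V(S)$, every target is reachable from $s$ in $S$, and $w(S)\le b$. A maximizer is a feasible $S$ maximizing $\textsc{CD}_{\tau,s}(S)$ among feasible subgraphs. *)

From HB Require Import structures.
From mathcomp Require Import all_boot all_order all_algebra.
From mathcomp Require Import reals.
Set Implicit Arguments. Unset Strict Implicit. Unset Printing Implicit Defensive.
Import Order.TTheory GRing.Theory Num.Theory.
Local Open Scope ring_scope.

(* A directed graph G = (V, E, w): vertices are the elements of a finType V,
   edges are a set E of ordered pairs (u, v) (edge u -> v), weights w. *)

Record subgraph (V : finType) := Subgraph { sV : {set V}; sE : {set V * V} }.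

Section Defs.
Variables (V : finType) (R : realType).

Definition is_subgraph (E : {set V * V}) (S : subgraph V) : Prop :=
  sE S \subset E /\ (forall x y, (x, y) \in sE S -> (x \in sV S) /\ (y \in sV S)).

Definition sedge (S : subgraph V) : rel V := fun x y => (x, y) \in sE S.

Definition reach (S : subgraph V) (x y : V) : bool := connect (sedge S) x y.

Definition cost (w : V * V -> R) (S : subgraph V) : R := \sum_(e in sE S) w e.

(* A path s = v_0 -> v_1 -> ... -> v_k = t in S is represented by p with
   s :: p = [v_0; ...; v_k]; it is a path in S from s to t iff
   path (sedge S) s p and last s p = t. *)
Definition is_path_in (S : subgraph V) (s t : V) (p : seq V) : bool :=
  path (sedge S) s p && (last s p == t).

(* Index l of the last deceptive point of the path s :: p towards target t:
   the largest index i <= k such that some target t' in tau, t' <> t,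
   is reachable in S from v_i. *)
Definition last_dec_idx (S : subgraph V) (tau : {set V}) (s t : V) (p : seq V)
  : nat :=
  \max_(i < (size p).+1 |
          [exists t' in tau, (t' != t) && reach S (nth s (s :: p) i) t']) (i : nat).

(* w_P(v_i, v_k) = sum of weights of the edges v_j -> v_{j+1}, i <= j < k. *)
Definition wP_suffix (w : V * V -> R) (s : V) (p : seq V) (i : nat) : R :=
  \sum_(i <= j < size p) w (nth s (s :: p) j, nth s (s :: p) j.+1).

Definition dec_suffix_weight (w : V * V -> R) (S : subgraph V) (tau : {set V})
  (s t : V) (p : seq V) : R :=
  wP_suffix w s p (last_dec_idx S tau s t p).

Definition is_unique_dist (w : V * V -> R) (S : subgraph V) (tau : {set V})
  (s t : V) (u : R) : Prop :=
  (exists p, is_path_in S s t p /\ dec_suffix_weight w S tau s t p = u) /\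
  (forall p, is_path_in S s t p -> u <= dec_suffix_weight w S tau s t p).

Definition is_CD (w : V * V -> R) (S : subgraph V) (tau : {set V}) (s : V)
  (c : R) : Prop :=
  (forall t, t \in tau -> exists u, is_unique_dist w S tau s t u) /\
  (exists t, t \in tau /\ is_unique_dist w S tau s t c) /\
  (forall t u, t \in tau -> is_unique_dist w S tau s t u -> c <= u).

Definition feasible (E : {set V * V}) (w : V * V -> R) (s : V) (tau : {set V})
  (b : R) (S : subgraph V) : Prop :=
  [/\ is_subgraph E S, s \in sV S, tau \subset sV S,
      (forall t, t \in tau -> reach S s t) & cost w S <= b].

Definition uadj (S : subgraph V) : rel V :=
  fun x y => ((x, y) \in sE S) || ((y, x) \in sE S).

(* Covers self-loops (m = 1) and antiparallel
   edge pairs (m = 2). *)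
Definition has_ucycle (S : subgraph V) : Prop :=
  exists (x0 : V) (es : seq (V * V)) (vs : seq V),
    [/\ (0 < size es)%N /\ size vs = size es, uniq es, uniq vs,
        all (fun e => e \in sE S) es &
        forall i, (i < size es)%N ->
          let a := nth x0 vs i in
          let b := nth x0 vs ((i.+1) %% size es) in
          (nth (x0, x0) es i == (a, b)) || (nth (x0, x0) es i == (b, a))].

Definition is_undirected_tree (S : subgraph V) : Prop :=
  (forall x y, x \in sV S -> y \in sV S -> connect (uadj S) x y) /\ not (has_ucycle S).

Definition indeg (S : subgraph V) (v : V) : nat :=
  #|[set e in sE S | e.2 == v]|.

Definition is_arborescence (S : subgraph V) (s : V) : Prop :=
  [/\ s \in sV S, is_undirected_tree S, indeg S s = 0%N &
      forall v, v \in sV S -> v != s -> indeg S v = 1%N].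

End Defs.

From HB Require Import structures.
From mathcomp Require Import all_boot all_order all_algebra.
From mathcomp Require Import reals.
From mathcomp Require Import zify.
From Stdlib Require Import Classical.
Set Implicit Arguments. Unset Strict Implicit. Unset Printing Implicit Defensive.
Import Order.TTheory GRing.Theory Num.Theory.
Local Open Scope ring_scope.

(* Replace a feasible subgraph [S] by a shortest-hop (BFS) out-tree of [S]
   rooted at [s]: it keeps every target reachable, costs no more since
   weights are nonnegative, and has counterdeceptiveness at least that of
   [S], because removing edges shrinks reachability (so the last deceptive
   point of a path moves earlier and its deceptive-free suffix gets
   heavier) and only removes paths.  Hence the maximum over the finitely
   many feasible arborescences is a maximum over all feasible subgraphs. *)

Section FiniteMaximum.
Variables (d : Order.disp_t) (R : orderType d) (T : finType) (P : T -> R -> Prop).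
Hypothesis P_functional : forall {x c c'}, P x c -> P x c' -> c = c'.

Local Notation bounds l c :=
  (forall y c', y \in l -> P y c' -> (c' <= c)%O).

Lemma exists_max_seq (l : seq T) :
  (exists x c, x \in l /\ P x c) -> exists x c, P x c /\ bounds l c.
Proof.
elim: l => [|a l IH] [x0 [c0 [x0l Px0]]] //.
have bounds_cons x c : P x c -> bounds l c -> (forall c', P a c' -> (c' <= c)%O) ->
    exists x c, P x c /\ bounds (a :: l) c.
  move=> Pxc maxl maxa; exists x, c; split=> // y c'.
  by rewrite in_cons => /predU1P [->|/maxl]; [apply: maxa|apply].
have [exl|nol] := classic (exists y c, y \in l /\ P y c); last first.
  move: x0l; rewrite in_cons => /predU1P [x0a|x0l]; last by case: nol; exists x0, c0.
  apply: (bounds_cons x0 c0) => [//|y c' yl Py|c']; first by case: nol; exists y, c'.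
  by rewrite -x0a => /(P_functional Px0) ->.
have [x [c [Pxc maxl]]] := IH exl.
have [[ca Pa]|noa] := classic (exists ca, P a ca); last first.
  by apply: (bounds_cons x c) => // c' Pa; case: noa; exists c'.
have [ca_le_c|c_lt_ca] := leP ca c.
  by apply: (bounds_cons x c) => // c' /(P_functional Pa) <-.
apply: (bounds_cons a ca) => [//|z cz zl Pz|c' /(P_functional Pa) <-//].
exact: le_trans (maxl _ _ zl Pz) (ltW c_lt_ca).
Qed.

Lemma exists_max_fun :
  (exists x c, P x c) -> exists x c, P x c /\ forall y c', P y c' -> (c' <= c)%O.
Proof.
case=> x0 [c0 Px0]; have [|x [c [Pxc maxc]]] := exists_max_seq (l := enum T).
  by exists x0, c0; rewrite mem_enum.
by exists x, c; split=> // y c'; apply: maxc; rewrite mem_enum.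
Qed.

End FiniteMaximum.

Section Counterdeceptiveness.
Variables (R : realType) (V : finType) (w : V * V -> R) (tau : {set V}) (s : V).

Lemma last_dec_idx_le_size S t p : (last_dec_idx S tau s t p <= size p)%N.
Proof. by apply/bigmax_leqP => i _; rewrite -ltnS. Qed.

Lemma last_dec_idx_subgraph S T t p :
  {subset sE T <= sE S} -> (last_dec_idx T tau s t p <= last_dec_idx S tau s t p)%N.
Proof.
move=> sub_TS; apply/bigmax_leqP => i /existsP [t' /and3P [t'_tau t'_t reach_t']].
apply: (leq_bigmax_cond (F := fun i : 'I_ _ => nat_of_ord i)).
apply/existsP; exists t'; rewrite t'_tau t'_t /=.
by apply: connect_sub reach_t' => x y xy; apply/connect1/sub_TS.
Qed.

Lemma wP_suffix_antitone p i j :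
  (forall k, (k < size p)%N -> 0 <= w (nth s (s :: p) k, nth s (s :: p) k.+1)) ->
  (i <= j <= size p)%N -> wP_suffix w s p j <= wP_suffix w s p i.
Proof.
move=> w_ge0 /andP [ij jp]; rewrite /wP_suffix (big_cat_nat ij jp) /= lerDr.
rewrite big_seq_cond; apply: sumr_ge0 => k /andP [+ _].
by rewrite mem_index_iota => /andP [_ kj]; apply/w_ge0/(leq_trans kj).
Qed.

Lemma is_path_in_subgraph S T t p :
  {subset sE T <= sE S} -> is_path_in T s t p -> is_path_in S s t p.
Proof.
move=> sub_TS /andP [pT lastp]; rewrite /is_path_in lastp andbT.
by apply: sub_path pT => x y /sub_TS.
Qed.

Lemma dec_suffix_weight_subgraph S T t p :
  {subset sE T <= sE S} -> (forall e, e \in sE T -> 0 <= w e) ->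
  is_path_in T s t p ->
  dec_suffix_weight w S tau s t p <= dec_suffix_weight w T tau s t p.
Proof.
move=> sub_TS w_ge0 /andP [/(pathP s) pT _]; apply: wP_suffix_antitone.
  by move=> k kp; apply/w_ge0/pT.
by rewrite last_dec_idx_subgraph // last_dec_idx_le_size.
Qed.

Lemma is_CD_antitone S T c c' :
  {subset sE T <= sE S} -> (forall e, e \in sE T -> 0 <= w e) ->
  is_CD w T tau s c -> is_CD w S tau s c' -> c' <= c.
Proof.
move=> sub_TS w_ge0 [_ [[t [t_tau [[p [pT <-]] _]]] _]] [U_S [_ min_S]].
have [u Ut] := U_S t t_tau.
apply: le_trans (min_S _ _ t_tau Ut) _; apply: le_trans (Ut.2 _ _) _.
  exact: is_path_in_subgraph pT.
exact: dec_suffix_weight_subgraph.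
Qed.

Lemma unique_dist_functional S t u u' :
  is_unique_dist w S tau s t u -> is_unique_dist w S tau s t u' -> u = u'.
Proof.
move=> [[p [pS <-]] min_u] [[p' [p'S <-]] min_u'].
by apply: le_anti; rewrite min_u // min_u'.
Qed.

Lemma is_CD_functional S c c' :
  is_CD w S tau s c -> is_CD w S tau s c' -> c = c'.
Proof.
move=> [_ [[t [t_tau Ut]] min_c]] [_ [[t' [t'_tau Ut']] min_c']].
by apply: le_anti; rewrite (min_c _ _ t'_tau Ut') (min_c' _ _ t_tau Ut).
Qed.

Lemma unique_dist_of_unique_path S t p :
  is_path_in S s t p -> (forall q, is_path_in S s t q -> q = p) ->
  is_unique_dist w S tau s t (dec_suffix_weight w S tau s t p).
Proof. by move=> pS uniq_p; split=> [|q /uniq_p ->]; first exists p. Qed.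

Lemma exists_CD S :
  tau != set0 -> (forall t, t \in tau -> exists u, is_unique_dist w S tau s t u) ->
  exists c, is_CD w S tau s c.
Proof.
move=> /set0Pn [t0 t0_tau] U_S.
pose P t u := t \in tau /\ is_unique_dist w S tau s t u.
have P_functional t u u' : P t u -> P t u' -> u = u'.
  by move=> [_ Ut] [_ Ut']; apply: unique_dist_functional Ut Ut'.
have [|t [c [[t_tau Ut] min_c]]] := @exists_max_fun _ R^d _ P P_functional.
  by have [u Ut0] := U_S t0 t0_tau; exists t0, u.
exists c; split=> //; split; first by exists t.
by move=> t' u t'_tau Ut'; exact: (min_c t' u (conj t'_tau Ut')).
Qed.

End Counterdeceptiveness.

Lemma cost_subgraph (R : realType) (V : finType) (w : V * V -> R) (S T : subgraph V) :
  sE T \subset sE S -> (forall e, e \in sE S -> 0 <= w e) -> cost w T <= cost w S.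
Proof.
move=> sub_TS w_ge0; rewrite /cost [leRHS](big_setID (sE T)) (setIidPr sub_TS) /=.
by rewrite lerDl sumr_ge0 // => e /setDP [/w_ge0].
Qed.

Section InForests.
Variables (V : finType) (T : subgraph V).
Hypothesis in_edge_uniq : forall {x x' y}, (x, y) \in sE T -> (x', y) \in sE T -> x = x'.

Lemma no_ucycle_of_rank (rank : V -> nat) :
  (forall x y, (x, y) \in sE T -> (rank x < rank y)%N) -> ~ has_ucycle T.
Proof.
move=> rank_lt [x0 [es [vs [[es_gt0 _] uniq_es _ es_T cyc]]]].
set m := size es in es_gt0 cyc.
have esT k : (k < m)%N -> nth (x0, x0) es k \in sE T.
  by move=> km; apply/(allP es_T)/mem_nth.
(* Both cycle edges at a vertex of maximal rank enter it, so by uniqueness of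
   in-edges they coincide, which forces a loop. *)
case: (@arg_maxnP _ (Ordinal es_gt0) xpredT (fun i : 'I_m => rank (nth x0 vs i))) => //.
move=> i _ max_i; set v := nth x0 vs i in max_i.
have not_out_of_v k u : (k < m)%N -> (u < m)%N -> nth (x0, x0) es k != (v, nth x0 vs u).
  move=> km um; apply/eqP => ek; have := esT k km.
  rewrite ek => /rank_lt v_lt_u.
  by have /= := max_i (Ordinal um) isT; rewrite leqNgt v_lt_u.
have [j jm ji] : exists2 j, (j < m)%N & (j.+1 %% m = i)%N.
  have [->|i_gt0] := posnP i.
    by exists m.-1; rewrite ?prednK ?modnn // ltn_predL.
  by exists i.-1; [have := ltn_ord i; lia|rewrite prednK ?modn_small].
have ei : nth (x0, x0) es i = (nth x0 vs (i.+1 %% m), v).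
  have := not_out_of_v i _ (ltn_ord i) (ltn_pmod i.+1 es_gt0).
  by case/orP: (cyc i (ltn_ord i)) => /eqP -> //; rewrite eqxx.
have ej : nth (x0, x0) es j = (nth x0 vs j, v).
  have := not_out_of_v j _ jm jm.
  by case/orP: (cyc j jm) => /eqP ->; rewrite ji ?eqxx.
have eiT := esT i (ltn_ord i); rewrite ei in eiT.
have ejT := esT j jm; rewrite ej in ejT.
have ij : nat_of_ord i = j.
  apply/eqP; rewrite -(nth_uniq (x0, x0) (ltn_ord i) jm uniq_es) ei ej.
  by rewrite (in_edge_uniq eiT ejT).
by have := rank_lt _ _ eiT; rewrite ij ji ltnn.
Qed.

Lemma path_from_root_uniq (s : V) :
  (forall x, (x, s) \notin sE T) ->
  forall p q, path (sedge T) s p -> path (sedge T) s q -> last s p = last s q -> p = q.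
Proof.
move=> no_in_s; elim/last_ind => [|p y IH] q; case/lastP: q => [|q z] //.
- rewrite rcons_path last_rcons => _ /andP [_ zT] /= sz.
  by move: zT; rewrite -sz /sedge (negbTE (no_in_s _)).
- rewrite rcons_path last_rcons => /andP [_ yT] _ /= ys.
  by move: yT; rewrite ys /sedge (negbTE (no_in_s _)).
rewrite !rcons_path !last_rcons => /andP [p_T yT] /andP [q_T zT] yz; subst z.
by rewrite (IH q) // (in_edge_uniq yT zT).
Qed.

End InForests.

Section BFSTree.
Variables (V : finType) (S : subgraph V) (s : V).

Definition walk_of_size (v : V) (n : nat) : bool :=
  [exists q : n.-tuple V, path (sedge S) s q && (last s q == v)].

Lemma exists_hops_bound (v : V) : exists n, ~~ reach S s v || walk_of_size v n.
Proof.
have [/connectP [q qS ->]|] := boolP (reach S s v); last by exists 0%N; apply/orP; left.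
by exists (size q); apply/orP; right; apply/existsP; exists (in_tuple q); rewrite qS /=.
Qed.

(* The hop distance from [s]; it is [0] on vertices not reachable from [s]. *)
Definition hops (v : V) : nat := ex_minn (exists_hops_bound v).

Lemma hops_le_size q : path (sedge S) s q -> (hops (last s q) <= size q)%N.
Proof.
move=> qS; rewrite /hops; case: ex_minnP => n _; apply; apply/orP; right.
by apply/existsP; exists (in_tuple q); rewrite qS /=.
Qed.

Lemma shortest_walk v :
  reach S s v -> exists2 q, path (sedge S) s q & last s q = v /\ size q = hops v.
Proof.
move=> reach_v; rewrite /hops; case: ex_minnP => n.
by rewrite reach_v => /existsP [q /andP [qS /eqP qv]] _; exists q; rewrite ?size_tuple.
Qed.

Lemma exists_parent v : reach S s v -> v != s ->
  exists u, [&& (u, v) \in sE S, reach S s u & (hops u).+1 == hops v].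
Proof.
move=> reach_v v_s; have [q qS [qv q_size]] := shortest_walk reach_v.
case/lastP: q qS qv q_size => [_ /= sv|q y]; first by rewrite sv eqxx in v_s.
rewrite rcons_path last_rcons size_rcons => /andP [qS uv] yv q_size; subst y.
have reach_u : reach S s (last s q) by apply/connectP; exists q.
exists (last s q); apply/and3P; split=> //; apply/eqP.
have [q' q'S [q'u q'_size]] := shortest_walk reach_u.
have : (hops v <= (size q').+1)%N.
  have := @hops_le_size (rcons q' v); rewrite last_rcons size_rcons; apply.
  by rewrite rcons_path q'S q'u.
by move: (hops_le_size qS); rewrite q'_size -q_size; lia.
Qed.

Definition parent (v : V) : V :=
  odflt s [pick u | [&& (u, v) \in sE S, reach S s u & (hops u).+1 == hops v]].

Lemma parentP v : reach S s v -> v != s ->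
  [/\ (parent v, v) \in sE S, reach S s (parent v) & (hops (parent v)).+1 = hops v].
Proof.
move=> reach_v v_s; rewrite /parent; case: pickP => [u /and3P [? ? /eqP]|no_u] //=.
by have [u] := exists_parent reach_v v_s; rewrite no_u.
Qed.

Definition bfs_tree : subgraph V :=
  Subgraph [set v | reach S s v]
           [set e in sE S | [&& e.2 != s, reach S s e.2 & e.1 == parent e.2]].

Lemma bfs_tree_edge x y : (x, y) \in sE bfs_tree ->
  [/\ (x, y) \in sE S, y != s, reach S s y & x = parent y].
Proof. by rewrite inE => /and4P [? ? ? /eqP]. Qed.

Lemma parent_edge_bfs_tree y : reach S s y -> y != s -> (parent y, y) \in sE bfs_tree.
Proof.
move=> reach_y y_s; have [uy _ _] := parentP reach_y y_s.
by rewrite !inE /= uy y_s reach_y eqxx.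
Qed.

Lemma bfs_tree_sub : {subset sE bfs_tree <= sE S}.
Proof. by move=> [x y] /bfs_tree_edge []. Qed.

Lemma hops_lt_bfs_tree x y : (x, y) \in sE bfs_tree -> (hops x < hops y)%N.
Proof.
by move=> /bfs_tree_edge [_ y_s reach_y ->]; have [_ _ <-] := parentP reach_y y_s.
Qed.

Lemma bfs_tree_in_edge_uniq x x' y :
  (x, y) \in sE bfs_tree -> (x', y) \in sE bfs_tree -> x = x'.
Proof. by move=> /bfs_tree_edge [_ _ _ ->] /bfs_tree_edge [_ _ _ ->]. Qed.

Lemma bfs_tree_no_in_root x : (x, s) \notin sE bfs_tree.
Proof. by apply/negP => /bfs_tree_edge [_ /eqP]. Qed.

Lemma reach_bfs_tree v : reach S s v -> reach bfs_tree s v.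
Proof.
have [n] := ubnP (hops v); elim: n v => // n IH v hops_v reach_v.
have [->|v_s] := eqVneq v s; first exact: connect0.
have [_ reach_u hops_u] := parentP reach_v v_s.
apply: connect_trans (IH _ _ reach_u) (connect1 (parent_edge_bfs_tree reach_v v_s)).
by rewrite -ltnS hops_u.
Qed.

Lemma bfs_tree_arborescence : is_arborescence bfs_tree s.
Proof.
split; first by rewrite inE; apply: connect0.
- split; last exact: (@no_ucycle_of_rank _ _ bfs_tree_in_edge_uniq hops hops_lt_bfs_tree).
  have uadj_sym : connect_sym (uadj bfs_tree).
    by apply: sym_connect_sym => a b; rewrite /uadj orbC.
  have from_s z : z \in sV bfs_tree -> connect (uadj bfs_tree) s z.
    rewrite inE => /reach_bfs_tree; apply: connect_sub => a b ab.
    by apply: connect1; apply/orP; left.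
  by move=> x y /from_s sx /from_s sy; rewrite (connect_trans _ sy) // uadj_sym.
- apply/eqP; rewrite cards_eq0; apply/eqP/setP => -[x y]; rewrite in_set0 inE /=.
  by apply/negbTE; apply: contraNN (bfs_tree_no_in_root x) => /andP [xy /eqP <-].
- move=> v; rewrite inE => reach_v v_s; rewrite /indeg.
  suff -> : [set e in sE bfs_tree | e.2 == v] = [set (parent v, v)] by rewrite cards1.
  apply/setP => -[x y]; rewrite inE in_set1 /=; apply/andP/eqP.
    by move=> [/bfs_tree_edge [_ _ _ ->] /eqP ->].
  by move=> [-> ->]; rewrite parent_edge_bfs_tree.
Qed.

End BFSTree.

Section FeasibleTrees.
Variables (R : realType) (V : finType) (E : {set V * V}) (w : V * V -> R).
Variables (s : V) (tau : {set V}) (b : R).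
Hypothesis w_ge0 : forall e, e \in E -> 0 <= w e.

Lemma feasible_bfs_tree S : feasible E w s tau b S -> feasible E w s tau b (bfs_tree S s).
Proof.
move=> [[SE_E _] _ _ reach_tau cost_S]; split.
- split; first by apply/subsetP => e /bfs_tree_sub /(subsetP SE_E).
  move=> x y /bfs_tree_edge [_ y_s reach_y ->]; rewrite !inE reach_y.
  by have [_ -> _] := parentP reach_y y_s.
- by rewrite inE; apply: connect0.
- by apply/subsetP => t /reach_tau; rewrite inE.
- by move=> t /reach_tau /reach_bfs_tree.
- apply: le_trans cost_S; apply: cost_subgraph; first exact/subsetP/bfs_tree_sub.
  by move=> e /(subsetP SE_E) /w_ge0.
Qed.

Lemma exists_CD_bfs_tree S : tau != set0 ->
  (forall t, t \in tau -> reach S s t) -> exists c, is_CD w (bfs_tree S s) tau s c.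
Proof.
move=> tau_n0 reach_tau; apply: exists_CD => // t.
move=> /reach_tau /reach_bfs_tree /connectP [p pT tp].
have pt : is_path_in (bfs_tree S s) s t p by rewrite /is_path_in pT tp eqxx.
exists (dec_suffix_weight w (bfs_tree S s) tau s t p).
apply: unique_dist_of_unique_path => // q /andP [qT /eqP qt].
apply: (path_from_root_uniq (@bfs_tree_in_edge_uniq _ S s)) qT pT _.
  exact: bfs_tree_no_in_root.
by rewrite qt.
Qed.

Lemma CD_le_bfs_tree S c c' : feasible E w s tau b S ->
  is_CD w (bfs_tree S s) tau s c -> is_CD w S tau s c' -> c' <= c.
Proof.
move=> [[SE_E _] _ _ _ _]; apply: is_CD_antitone; first exact: bfs_tree_sub.
by move=> e /bfs_tree_sub /(subsetP SE_E) /w_ge0.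
Qed.

End FeasibleTrees.

Theorem lemma3 (R : realType) (V : finType) (E : {set V * V}) (w : V * V -> R)
  (s : V) (tau : {set V}) (b : R) :
  (forall e, e \in E -> 0 <= w e) ->
  s \notin tau ->
  (2 <= #|tau|)%N ->
  0 <= b ->
  (exists S : subgraph V, feasible E w s tau b S) ->
  exists S : subgraph V,
    [/\ feasible E w s tau b S,
        is_arborescence S s &
        exists c : R, is_CD w S tau s c /\
          (forall (S' : subgraph V) (c' : R),
             feasible E w s tau b S' -> is_CD w S' tau s c' -> c' <= c)].
Proof.
move=> w_ge0 _ tau_ge2 _ [S0 S0_feasible].
have tau_n0 : tau != set0 by rewrite -card_gt0 (leq_trans _ tau_ge2).
(* Subgraphs are encoded as pairs of sets so as to range over a finite type. *)
pose good_tree (x : {set V} * {set V * V}) c := let T := Subgraph x.1 x.2 in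
  [/\ feasible E w s tau b T, is_arborescence T s & is_CD w T tau s c].
have good_bfs_tree S : feasible E w s tau b S ->
    exists c, good_tree (sV (bfs_tree S s), sE (bfs_tree S s)) c.
  move=> S_feasible; have [_ _ _ reach_tau _] := S_feasible.
  have [c CD_c] := exists_CD_bfs_tree w tau_n0 reach_tau.
  exists c; split=> //; [exact: feasible_bfs_tree | exact: bfs_tree_arborescence].
have [||x [c [[x_feasible x_tree x_CD] max_c]]] := @exists_max_fun _ R _ good_tree.
- by move=> x c c' [_ _ CD_c] [_ _ CD_c']; apply: is_CD_functional CD_c CD_c'.
- have [c] := good_bfs_tree _ S0_feasible.
  by exists (sV (bfs_tree S0 s), sE (bfs_tree S0 s)), c.
exists (Subgraph x.1 x.2); split=> //; exists c; split=> // S c' S_feasible CD_c'.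
have [cT good_cT] := good_bfs_tree S S_feasible; have [_ _ CD_cT] := good_cT.
exact: le_trans (CD_le_bfs_tree w_ge0 S_feasible CD_cT CD_c') (max_c _ _ good_cT).
Qed.
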